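(* Let $\mathbb G$ be the projective Fraïssé limit of the class $\mathcal G$ of finite connected graphs with confluent epimorphisms. Then the edge relation $E(\mathbb G)$ is transitive.
   Context: A graph is a pair $A=(V(A),E(A))$ with $E(A)\subseteq V(A)^2$ reflexive and symmetric. A topological graph is a graph whose vertex set is a compact, second countable, zero-dimensional (metrizable) space and whose edge set is closed in $V^2$. A homomorphism maps edges to edges; an epimorphism is a homomorphism surjective on vertices and on edges (continuous, when the domain is a topological graph). A subset $S\subseteq V(A)$ of a (topological) graph is disconnected if there are nonempty closed subsets $P,Q$ of $S$ with $P\cup Q=S$ and no edge $\langle a,b\rangle$ with $a\in P$, $b\in Q$; otherwise connected. Components are maximal connected subsets. An epimorphism $f\colon A\to B$ is confluent if for every connected $Q\subseteq V(B)$ and every component $C$ of $f^{-1}(Q)$, $f(C)=Q$. $\mathcal G$ is the class of finite connected graphs with confluent epimorphisms; it is a projective Fraïssé class. Its projective Fraïssé limit $\mathbb G$ is the unique (up to isomorphism) topological graph such that: (1) for each $A\in\mathcal G$ there is a confluent epimorphism $\mathbb G\to A$; (2) for $A,B\in\mathcal G$ and confluent epimorphisms $f\colon\mathbb G\to A$, $g\colon B\to A$ there is a confluent epimorphism $h\colon\mathbb G\to B$ with $f=g\circ h$; (3) for every $\varepsilon>0$ (with respect to a fixed compatible metric) there are $A\in\mathcal G$ and a confluent epimorphism $f\colon\mathbb G\to A$ all of whose point-preimages have diameter $<\varepsilon$. *)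

From HB Require Import structures.
From mathcomp Require Import all_boot all_order all_algebra.
From mathcomp Require Import all_classical all_reals topology.
Set Implicit Arguments. Unset Strict Implicit. Unset Printing Implicit Defensive.
Import Order.TTheory GRing.Theory Num.Theory.
Local Open Scope classical_set_scope.
Local Open Scope ring_scope.

(** * Generic graph notions.  A "graph" on a carrier X is an edge relation
    EX : X -> X -> Prop; [clX S P] says "P is a closed subset of S"
    (relative closedness in the subspace S). *)

Definition gdisconnected {X : Type} (clX : set X -> set X -> Prop)
  (EX : X -> X -> Prop) (S : set X) : Prop :=
  exists P Q : set X, [/\ P !=set0 /\ Q !=set0, clX S P, clX S Q,
    P `|` Q = S & forall a b, P a -> Q b -> ~ EX a b].

Definition gconnected {X : Type} (clX : set X -> set X -> Prop)
  (EX : X -> X -> Prop) (S : set X) : Prop := ~ gdisconnected clX EX S.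

Definition gcomponent {X : Type} (clX : set X -> set X -> Prop)
  (EX : X -> X -> Prop) (S C : set X) : Prop :=
  [/\ C `<=` S, gconnected clX EX C &
      forall D, C `<=` D -> D `<=` S -> gconnected clX EX D -> D = C].

Definition gepi {X Y : Type} (EX : X -> X -> Prop) (EY : Y -> Y -> Prop)
  (f : X -> Y) : Prop :=
  [/\ (forall a b, EX a b -> EY (f a) (f b)),
      (forall y, exists x, f x = y) &
      (forall c d, EY c d -> exists a b, [/\ EX a b, f a = c & f b = d])].

Definition gconfluent {X Y : Type}
  (clX : set X -> set X -> Prop) (EX : X -> X -> Prop)
  (clY : set Y -> set Y -> Prop) (EY : Y -> Y -> Prop) (f : X -> Y) : Prop :=
  forall Q : set Y, gconnected clY EY Q ->
  forall C : set X, gcomponent clX EX (f @^-1` Q) C -> f @` C = Q.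

Definition fin_closed {V : Type} (S P : set V) : Prop := P `<=` S.

Definition fin_edge {V : finType} (e : rel V) : V -> V -> Prop :=
  fun a b => e a b.

Definition fin_conn_graph (V : finType) (e : rel V) : Prop :=
  [/\ (exists v : V, True), reflexive e, symmetric e &
      gconnected (@fin_closed V) (fin_edge e) [set: V]].

Definition fin_confluent_epi (W V : finType) (e' : rel W) (e : rel V)
  (g : W -> V) : Prop :=
  gepi (fin_edge e') (fin_edge e) g /\
  gconfluent (@fin_closed W) (fin_edge e') (@fin_closed V) (fin_edge e) g.

Definition top_closed {T : topologicalType} (S P : set T) : Prop :=
  P `<=` S /\ exists C : set T, closed C /\ P = C `&` S.

Definition top_edge {T : Type} (E : set (T * T)) : T -> T -> Prop :=
  fun a b => E (a, b).

Definition topological_graph {T : topologicalType} (E : set (T * T)) : Prop :=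
  [/\ compact [set: T], @second_countable T, zero_dimensional T,
      closed E & (forall x, E (x, x)) /\ (forall x y, E (x, y) -> E (y, x))].

(** Continuity of a map into a finite graph, whose vertex set carries the
    discrete topology: all point preimages are open. *)
Definition cont_to_discrete {T : topologicalType} {V : Type} (f : T -> V) : Prop :=
  forall v : V, open (f @^-1` [set v]).

Definition top_confluent_epi {T : topologicalType} (E : set (T * T))
  (V : finType) (e : rel V) (f : T -> V) : Prop :=
  [/\ cont_to_discrete f, gepi (top_edge E) (fin_edge e) f &
      gconfluent (@top_closed T) (top_edge E) (@fin_closed V) (fin_edge e) f].

Definition diam_lt {R : realType} {T : metricType R} (A : set T) (eps : R) : Prop :=
  exists2 d : R, d < eps & forall x y, A x -> A y -> mdist x y <= d.

(** The characterization (1)-(3) of the projective Fraïssé limit of 𝒢. *)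
Definition is_proj_fraisse_limit_G {R : realType} {T : metricType R}
  (E : set (T * T)) : Prop :=
  [/\ topological_graph E,
   (* (1) *)
   (forall (V : finType) (e : rel V), fin_conn_graph e ->
      exists f : T -> V, top_confluent_epi E e f),
   (* (2) *)
   (forall (V W : finType) (e : rel V) (e' : rel W),
      fin_conn_graph e -> fin_conn_graph e' ->
      forall (f : T -> V) (g : W -> V),
      top_confluent_epi E e f -> fin_confluent_epi e' e g ->
      exists h : T -> W, top_confluent_epi E e' h /\ f = g \o h) &
   (* (3) *)
   (forall eps : R, 0 < eps ->
      exists (V : finType) (e : rel V) (f : T -> V),
      [/\ fin_conn_graph e, top_confluent_epi E e f &
          forall v : V, diam_lt (f @^-1` [set v]) eps])].

(* Suppose x E y and y E z but not x E z.  As E is closed, some eps-balls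
   around x and z carry no edge between them, so a confluent epimorphism
   f : G -> A with fibres of diameter < eps, given by (3), sends x, y, z to
   a path a - b - c of A with a and c non-adjacent.  Split b into two
   adjacent vertices, one keeping every edge of b except bc and the other
   every edge except ab.  The projection of this graph onto A has
   adjacent fibres, hence is confluent, so by (2) f factors through it; the
   lift of y is a copy of b adjacent to both lifts of x and z, which is
   impossible. *)
From HB Require Import structures.
From mathcomp Require Import all_boot all_order all_algebra.
From mathcomp Require Import all_classical all_reals topology.
Set Implicit Arguments. Unset Strict Implicit.
Import Order.TTheory.
Local Open Scope classical_set_scope.
Local Open Scope ring_scope.

Section CliqueFibres.
Variables (X Y : Type) (eX : X -> X -> Prop) (eY : Y -> Y -> Prop) (g : X -> Y).
Hypothesis g_surj : forall y, exists x, g x = y.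
Hypothesis g_lift :
  forall u v, eY u v -> exists p q, [/\ eX p q, g p = u & g q = v].
Hypothesis g_fibre_edge : forall p q, g p = g q -> eX p q.

Lemma preimage_gconnected Q : gconnected (@fin_closed Y) eY Q ->
  gconnected (@fin_closed X) eX (g @^-1` Q).
Proof.
move=> cQ [P1 [P2 [[[p1 P1p1] [p2 P2p2]] sP1 sP2 P12 noE]]]; apply: cQ.
have [inQ1 inQ2] : (forall p, P1 p -> Q (g p)) /\ (forall p, P2 p -> Q (g p)).
  by split=> p ?; [exact: sP1 | exact: sP2].
have inP12 p : Q (g p) -> (P1 `|` P2) p by rewrite P12.
exists (g @` P1), (g @` P2); split.
- by split; [exists (g p1), p1 | exists (g p2), p2].
- by move=> _ [p ? <-]; exact: inQ1.
- by move=> _ [p ? <-]; exact: inQ2.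
- apply/seteqP; split; first by move=> _ [[p ? <-]|[p ? <-]]; auto.
  move=> y Qy; have [p gp] := g_surj y; rewrite -gp in Qy.
  by case: (inP12 p Qy) => ?; [left | right]; exists p.
- move=> _ _ [q1 P1q1 <-] [q2 P2q2 <-] /g_lift [p [q [epq gp gq]]].
  have [Qp Qq] : Q (g p) /\ Q (g q) by rewrite gp gq; split; auto.
  case: (inP12 p Qp) => P_p.
    case: (inP12 q Qq) => P_q; last exact: (noE p q).
    by apply: (noE q q2) => //; apply: g_fibre_edge.
  by apply: (noE q1 p) => //; apply: g_fibre_edge.
Qed.

Lemma gconfluent_clique_fibres :
  gconfluent (@fin_closed X) eX (@fin_closed Y) eY g.
Proof.
move=> Q cQ C [CQ Cconn Cmax].
have -> : C = g @^-1` Q by apply/esym/Cmax => //; exact: preimage_gconnected.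
apply/seteqP; split; first by move=> _ [p ? <-].
by move=> y Qy; have [p gp] := g_surj y; exists p; rewrite /preimage /= gp.
Qed.
End CliqueFibres.

Section SplitVertex.
Variables (V : finType) (e : rel V) (a b c : V).

Definition split_proj (p : option V) : V := if p is Some v then v else b.

(* [Some b] and [None] are the two copies of [b]. *)
Definition split_edge (p q : option V) : bool :=
  match p, q with
  | Some u, Some v => e u v && ~~ ((u == b) && (v == c) || (u == c) && (v == b))
  | Some u, None => e u b && (u != a)
  | None, Some v => e b v && (v != a)
  | None, None => true
  end.

Hypotheses (e_refl : reflexive e) (e_sym : symmetric e).
Hypotheses (neq_ab : a != b) (neq_cb : c != b) (neq_ac : a != c).

Lemma split_edge_refl : reflexive split_edge.
Proof.
case=> [u|] //=; rewrite e_refl /= andbC orbb.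
by apply/negP => /andP[/eqP uc ub]; move: neq_cb; rewrite -uc ub.
Qed.

Lemma split_edge_sym : symmetric split_edge.
Proof.
case=> [u|] [v|] //=; rewrite e_sym //.
by rewrite orbC (andbC (v == b)) (andbC (v == c)).
Qed.

Lemma split_edge_fibre p q : split_proj p = split_proj q -> split_edge p q.
Proof.
case: p q => [u|] [v|] //= => [-> | -> | <-]; first exact: (split_edge_refl (Some v)).
all: by rewrite e_refl eq_sym.
Qed.

Lemma split_proj_hom p q : split_edge p q -> e (split_proj p) (split_proj q).
Proof. by case: p q => [u|] [v|] //= /andP[]. Qed.

Lemma split_proj_lift u v : e u v ->
  exists p q, [/\ split_edge p q, split_proj p = u & split_proj q = v].
Proof.
move=> euv; have [/andP[/eqP ub /eqP vc]|nbc] := boolP ((u == b) && (v == c)).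
  by exists None, (Some v); rewrite /= -ub euv vc eq_sym neq_ac.
have [/andP[/eqP uc /eqP vb]|ncb] := boolP ((u == c) && (v == b)).
  by exists (Some u), None; rewrite /= -vb euv uc eq_sym neq_ac.
by exists (Some u), (Some v); rewrite /= euv (negbTE nbc) (negbTE ncb).
Qed.

Lemma split_proj_surj v : exists p, split_proj p = v.
Proof. by exists (Some v). Qed.

Lemma split_proj_eq_Some p v : v != b -> split_proj p = v -> p = Some v.
Proof. by case: p => [u|] /= vb hv; [rewrite hv | rewrite hv eqxx in vb]. Qed.

Lemma split_no_path q : split_proj q = b ->
  ~~ (split_edge (Some a) q && split_edge q (Some c)).
Proof. by case: q => [u|] /= => [<- | _]; rewrite !eqxx /= !andbF. Qed.

Lemma split_fin_conn_graph : fin_conn_graph e -> fin_conn_graph split_edge.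
Proof.
case=> _ _ _ Aconn; split; [by exists None | exact: split_edge_refl
  | exact: split_edge_sym | ].
rewrite -(preimage_setT split_proj).
exact: (preimage_gconnected split_proj_surj split_proj_lift split_edge_fibre).
Qed.

Lemma split_fin_confluent_epi : fin_confluent_epi split_edge e split_proj.
Proof.
split; last exact: (gconfluent_clique_fibres split_proj_surj split_proj_lift
  split_edge_fibre).
by split; [exact: split_proj_hom | exact: split_proj_surj | exact: split_proj_lift].
Qed.
End SplitVertex.

Lemma closed_rel_not_ball (R : realType) (T : metricType R) (E : set (T * T)) x z :
  closed E -> ~ E (x, z) -> exists2 eps : R, 0 < eps &
   forall u w, mdist x u < eps -> mdist z w < eps -> ~ E (u, w).
Proof.
move=> cE nE; have : nbhs (x, z) (~` E).
  by apply: open_nbhs_nbhs; split => //; exact: closed_openC.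
move=> /nbhs_ballP [eps eps0 Heps]; exists eps => // u w xu zw.
by apply: (Heps (u, w)); split => /=; rewrite ballEmdist.
Qed.

Lemma fine_epi_not_edge (R : realType) (T : metricType R) (E : set (T * T))
    (V : finType) (e : rel V) (f : T -> V) (eps : R) x z :
  gepi (top_edge E) (fin_edge e) f ->
  (forall v, diam_lt (f @^-1` [set v]) eps) ->
  (forall u w, mdist x u < eps -> mdist z w < eps -> ~ E (u, w)) ->
  ~ e (f x) (f z).
Proof.
move=> [_ _ f_lift] f_fine sepE /f_lift [u [w [Euw fu fw]]].
have near t t' : f t' = f t -> mdist t t' < eps.
  move=> ft; have [d d_eps Hd] := f_fine (f t).
  by apply: le_lt_trans d_eps; apply: Hd.
exact: (sepE u w (near _ _ fu) (near _ _ fw) Euw).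
Qed.

Theorem mainTheorem2 (R : realType) (T : metricType R) (E : set (T * T)) :
  is_proj_fraisse_limit_G E ->
  forall x y z : T, E (x, y) -> E (y, z) -> E (x, z).
Proof.
move=> [[_ _ _ E_closed _] _ G_extend G_fine] x y z Exy Eyz.
have [//|nExz] := pselect (E (x, z)); exfalso.
have [eps eps0 sepE] := closed_rel_not_ball E_closed nExz.
have [V [e [f [A_conn f_cepi f_fine]]]] := G_fine eps eps0.
have [_ f_epi _] := f_cepi; have [_ e_refl e_sym _] := A_conn.
have nac : ~ e (f x) (f z) by exact: fine_epi_not_edge f_epi f_fine sepE.
have [f_hom _ _] := f_epi; have eab := f_hom _ _ Exy; have ebc := f_hom _ _ Eyz.
have neq_ac : f x != f z by apply: contra_notN nac => /eqP ->; exact: e_refl.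
have neq_ab : f x != f y by apply: contra_notN nac => /eqP ->.
have neq_cb : f z != f y by apply: contra_notN nac => /eqP ->.
have [h [[_ [h_hom _ _] _] fE]] := G_extend _ _ _ _ A_conn
  (split_fin_conn_graph e_refl e_sym neq_ab neq_cb neq_ac A_conn)
  f _ f_cepi (split_fin_confluent_epi e_refl neq_ab neq_cb neq_ac).
have hfE t : split_proj (f y) (h t) = f t by rewrite [in RHS]fE.
have hx := split_proj_eq_Some neq_ab (hfE x).
have hz := split_proj_eq_Some neq_cb (hfE z).
have := split_no_path e (f x) (f z) (hfE y).
by rewrite -hx -hz (h_hom _ _ Exy) (h_hom _ _ Eyz).
Qed.
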